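(* Fix $\theta$ with $\phi(\theta)<\beta$. Then $s_1(\theta,\tau^\star(\theta))<\beta$ if and only if $\tau_1^d(\theta)>\tau_2^d(\theta)$. Consequently $s_1(\theta,\tau^\star(\theta))>\beta$ if and only if $\tau_1^d(\theta)<\tau_2^d(\theta)$.
   Context: Setup. Let $Q\in\{0,1\}$ be a random variable with $\mathbb P(Q=1)=\pi\in(0,1)$, and let $(\Theta,\Gamma)$ be a real-valued random vector whose conditional joint density given $Q=1$ is $h_q$ and given $Q=0$ is $h_u$, both strictly positive on $\mathbb R^2$. Monotone likelihood ratio assumption: $l(\theta,\gamma)=h_q(\theta,\gamma)/h_u(\theta,\gamma)$ is continuous and strictly increasing in each of $\theta$ and $\gamma$, and for each $\theta$ the map $\gamma\mapsto l(\theta,\gamma)$ has infimum $0$ and supremum $+\infty$. Fix payoffs $x_q>0$, $x_u>0$. For $\tau\in(-x_u,x_q)$ let $A(\tau)=\mathbb 1\{l(\Theta,\Gamma)>\frac{(1-\pi)(x_u+\tau)}{\pi(x_q-\tau)}\}$, $s_1(\theta,\tau)=\mathbb E[Q\mid\Theta=\theta,A(\tau)=1]$, $s_2(\theta,\tau)=\mathbb E[A(\tau)\mid\Theta=\theta]$, $\phi(\theta)=\mathbb P(Q=1\mid\Theta=\theta)$. The equalizing prejudice $\tau^\star(\theta)$ is the unique $\tau\in(-x_u,x_q)$ with $s_1(\theta,\tau)=s_2(\theta,\tau)$. Fix a cutoff $c\in(-x_u,x_q)$ and let $\beta=(x_u+c)/(x_q+x_u)\in(0,1)$. The critical prejudice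 $\tau_k^d(\theta)$, $k=1,2$, is the unique $\tau\in(-x_u,x_q)$ with $s_k(\theta,\tau)=\beta$ (it exists for $k=1$ when $\phi(\theta)<\beta$, and always for $k=2$). *)

From HB Require Import structures.
From mathcomp Require Import all_boot all_order all_algebra.
From mathcomp Require Import all_classical all_reals all_analysis.
Set Implicit Arguments. Unset Strict Implicit. Unset Printing Implicit Defensive.
Import Order.TTheory GRing.Theory Num.Theory.
Import numFieldNormedType.Exports.
Local Open Scope classical_set_scope.
Local Open Scope ring_scope.

Section Model.
Variable R : realType.
Local Notation mu := (@lebesgue_measure R).

(* h : R -> R -> R is a joint density of (Theta, Gamma) on R^2 that is
   strictly positive, and whose theta-sections are integrable (so that the
   conditional quantities given Theta = theta are defined pointwise). *)
Definition is_pos_density (h : R -> R -> R) : Prop :=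
  [/\ (forall t g, 0 < h t g),
      measurable_fun setT (fun p : R * R => h p.1 p.2),
      (\int[mu \x mu]_p (h p.1 p.2)%:E = 1)%E
    & forall t, mu.-integrable setT (fun g => (h t g)%:E)].

Definition secint (h : R -> R -> R) (t : R) (A : set R) : R :=
  fine (\int[mu]_(g in A) (h t g)%:E).

Definition lr (hq hu : R -> R -> R) (t g : R) : R := hq t g / hu t g.

Definition kappa (pi xq xu tau : R) : R :=
  ((1 - pi) * (xu + tau)) / (pi * (xq - tau)).

(* { gamma | A(tau) = 1 } at Theta = theta *)
Definition accset (hq hu : R -> R -> R) (pi xq xu t tau : R) : set R :=
  [set g | kappa pi xq xu tau < lr hq hu t g].

(* s_1(theta,tau) = E[Q | Theta = theta, A(tau) = 1] *)
Definition s1 (hq hu : R -> R -> R) (pi xq xu t tau : R) : R :=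
  let A := accset hq hu pi xq xu t tau in
  pi * secint hq t A / (pi * secint hq t A + (1 - pi) * secint hu t A).

(* s_2(theta,tau) = E[A(tau) | Theta = theta] *)
Definition s2 (hq hu : R -> R -> R) (pi xq xu t tau : R) : R :=
  let A := accset hq hu pi xq xu t tau in
  (pi * secint hq t A + (1 - pi) * secint hu t A) /
  (pi * secint hq t setT + (1 - pi) * secint hu t setT).

(* phi(theta) = P(Q = 1 | Theta = theta) *)
Definition phi (hq hu : R -> R -> R) (pi t : R) : R :=
  pi * secint hq t setT / (pi * secint hq t setT + (1 - pi) * secint hu t setT).

Definition MLR (hq hu : R -> R -> R) : Prop :=
  [/\ continuous (fun p : R * R => lr hq hu p.1 p.2),
      (forall t1 t2 g, t1 < t2 -> lr hq hu t1 g < lr hq hu t2 g),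
      (forall t g1 g2, g1 < g2 -> lr hq hu t g1 < lr hq hu t g2),
      (forall t e, 0 < e -> exists g, lr hq hu t g < e)
    & (forall t M, exists g, M < lr hq hu t g)].

End Model.

From HB Require Import structures.
From mathcomp Require Import all_boot all_order all_algebra.
From mathcomp Require Import all_classical all_reals all_analysis.
From mathcomp Require Import ring lra.
Set Implicit Arguments. Unset Strict Implicit. Unset Printing Implicit Defensive.
Import Order.TTheory GRing.Theory Num.Theory.
Import numFieldNormedType.Exports.
Local Open Scope classical_set_scope.
Local Open Scope ring_scope.

(* Fix theta and write L(g) = l(theta, g).  The acceptance region A(tau) is
   the superlevel set { L > kappa(tau) } of L, with kappa(tau) positive and
   strictly increasing in tau.  Under the monotone likelihood ratio assumption
   L is continuous, strictly increasing and onto ]0, +oo[, so for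
   tau < tau' the region A(tau') is A(tau) minus a band on which
   kappa(tau) < L <= kappa(tau'), and both the band and A(tau') have positive
   Lebesgue measure.  Removing the band loses mass (s_2 strictly decreases)
   and removes points of ratio below kappa(tau') while L > kappa(tau') on
   what remains (s_1 strictly increases).  The theorem then follows from an
   order-theoretic crossing lemma for an increasing and a decreasing function
   that meet at tau^*: s_1 at tau^* is below beta iff tau^* < tau_1^d and
   iff tau_2^d < tau^*. *)

Lemma Rintegral_gt0 d (T : measurableType d) (R : realType)
    (mu : {measure set T -> \bar R}) (D : set T) (f : T -> R) :
  measurable D -> mu.-integrable D (EFin \o f) ->
  (forall x, D x -> 0 < f x) -> (0 < mu D)%E -> 0 < Rintegral mu D f.
Proof.
move=> mD intf fpos muD.
rewrite lt_def Rintegral_ge0 ?andbT; last by move=> x /fpos/ltW.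
apply/eqP => int0.
have int_abs0 : (\int[mu]_(x in D) `|(EFin \o f) x| = 0)%E.
  rewrite -[RHS](_ : (Rintegral mu D f)%:E = 0)%E; last by rewrite int0.
  rewrite fineK ?integrable_fin_num //; apply: eq_integral => x /set_mem Dx.
  by rewrite /= ger0_norm // ltW // fpos.
have /integrableP[mf _] := intf.
have [N [mN N0 DN]] := (ae_eq_integral_abs mu mD mf).1 int_abs0.
have DsubN : D `<=` N.
  by move=> x Dx; apply: DN => /(_ Dx) [] /eqP; rewrite gt_eqF ?fpos.
have : (mu D <= mu N)%E by apply: le_measure; rewrite ?inE.
by rewrite N0 leNgt muD.
Qed.

Local Notation mu := (@lebesgue_measure _).

Lemma lebesgue_measure_gt0_itv (R : realType) (D : set R) (a b : R) :
  measurable D -> a < b -> `]a, b[ `<=` D -> (0 < mu D)%E.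
Proof.
move=> mD ab abD; apply: (@lt_le_trans _ _ (mu `]a, b[%classic)).
  by rewrite lebesgue_measure_itv /= lte_fin ab -EFinD lte_fin subr_gt0.
by apply: le_measure => //; rewrite inE //; exact: measurable_itv.
Qed.

Lemma continuous_section (R : realType) (F : R -> R -> R) (t : R) :
  continuous (fun p : R * R => F p.1 p.2) -> continuous (F t).
Proof.
move=> cF g; apply: (continuous_comp (f := fun x => (t, x))) (cF (t, g)).
exact: (cvg_pair (cvg_cst t) cvg_id).
Qed.

Definition superlevel {R : realType} (L : R -> R) (k : R) : set R :=
  [set g | k < L g].

Section Superlevel.
Variables (R : realType) (L : R -> R).
Hypotheses (L_cont : continuous L) (L_incr : forall x y, x < y -> L x < L y)
  (L_small : forall e : R, 0 < e -> exists g, L g < e)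
  (L_large : forall M, exists g, M < L g).

Let L_le_mono : {mono L : x y / x <= y}.
Proof. exact: le_mono L_incr. Qed.

Let L_mono : {mono L : x y / x < y}.
Proof. exact: leW_mono L_le_mono. Qed.

Lemma attains_pos (v : R) : 0 < v -> exists c, L c = v.
Proof.
move=> v0; have [a La] := L_small v0; have [b Lb] := L_large v.
have ab : a <= b by rewrite -L_le_mono (ltW (lt_trans La Lb)).
have vLab : Num.min (L a) (L b) <= v <= Num.max (L a) (L b).
  by rewrite ge_min le_max (ltW La) (ltW Lb) orbT.
by have [c _ Lc] := IVT ab (continuous_subspaceT L_cont) vLab; exists c.
Qed.

Lemma measurable_superlevel (k : R) : measurable (superlevel L k).
Proof.
have -> : superlevel L k = L @^-1` `]k, +oo[.
  by apply/seteqP; split => x /=; rewrite in_itv /= andbT.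
rewrite -[_ @^-1` _]setTI.
exact: (measurable_realfun.continuous_measurable_fun L_cont) measurableT _ (measurable_itv _).
Qed.

(* Every superlevel set has positive measure: it is a half-line. *)
Lemma superlevel_measure_gt0 (k : R) :
  (0 < mu (superlevel L k))%E.
Proof.
have [g0 Lg0] := L_large k.
have g01 : g0 < g0 + 1 by rewrite ltrDl.
apply: (lebesgue_measure_gt0_itv (measurable_superlevel k) g01).
move=> x; rewrite /= in_itv /= => /andP[g0x _].
by apply: lt_trans Lg0 _; rewrite L_mono.
Qed.

Lemma band_measure_gt0 (k k' : R) : 0 < k -> k < k' ->
  (0 < mu (superlevel L k `\` superlevel L k'))%E.
Proof.
move=> k0 kk'; have [c1 Lc1] := attains_pos k0.
have [c2 Lc2] := attains_pos (lt_trans k0 kk').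
have c12 : c1 < c2 by rewrite -L_mono Lc1 Lc2.
apply: (lebesgue_measure_gt0_itv _ c12).
  exact: measurableD (measurable_superlevel k) (measurable_superlevel k').
move=> x; rewrite /= in_itv /= => /andP[c1x xc2].
split; first by rewrite /superlevel /= -Lc1 L_mono.
by apply/negP; rewrite /superlevel /= -leNgt -Lc2 L_le_mono ltW.
Qed.

End Superlevel.

Section PositiveSection.
Variables (R : realType) (h : R -> R -> R) (t : R).
Hypotheses (h_pos : forall g, 0 < h t g)
  (h_int : mu.-integrable setT (fun g => (h t g)%:E)).

Let h_intS (A : set R) : measurable A -> mu.-integrable A (EFin \o h t).
Proof. by move=> mA; apply: integrableS h_int. Qed.

Lemma secint_gt0 (A : set R) : measurable A -> (0 < mu A)%E -> 0 < secint h t A.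
Proof. by move=> mA; apply: Rintegral_gt0 (h_intS mA) (fun g _ => h_pos g). Qed.

Lemma secint_split (A B : set R) : measurable A -> measurable B -> B `<=` A ->
  secint h t A = secint h t B + secint h t (A `\` B).
Proof.
move=> mA mB BA; rewrite /secint -[in LHS](setDUK BA).
apply: Rintegral_setU => //; first exact: measurableD.
  by rewrite setDUK //; exact: h_intS.
by apply/disj_setPS => x [Bx [_ nBx]].
Qed.

End PositiveSection.

Section RatioBounds.
Variables (R : realType) (hq hu : R -> R -> R) (t k : R) (A : set R).
Hypotheses (hq_int : mu.-integrable setT (fun g => (hq t g)%:E))
  (hu_int : mu.-integrable setT (fun g => (hu t g)%:E)) (mA : measurable A).

Let hq_intA : mu.-integrable A (EFin \o hq t).
Proof. by apply: integrableS hq_int. Qed.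

Let hu_intA : mu.-integrable A (EFin \o hu t).
Proof. by apply: integrableS hu_int. Qed.

Let khu_intA : mu.-integrable A (EFin \o (fun g => k * hu t g)).
Proof. by apply: eq_integrable (integrableZl _ k hu_intA). Qed.

Lemma secint_le_ratio : (forall g, A g -> hq t g <= k * hu t g) ->
  secint hq t A <= k * secint hu t A.
Proof.
by move=> hqk; rewrite /secint -RintegralZl //; exact: le_Rintegral.
Qed.

Lemma secint_gt_ratio : (0 < mu A)%E -> (forall g, A g -> k * hu t g < hq t g) ->
  k * secint hu t A < secint hq t A.
Proof.
move=> muA khq; rewrite -subr_gt0 /secint -RintegralZl // -RintegralB //.
apply: Rintegral_gt0 => //; last by move=> g /khq; rewrite subr_gt0.
by apply: eq_integrable (integrableB _ hq_intA khu_intA).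
Qed.

End RatioBounds.

Lemma kappa_gt0 (R : realType) (pi xq xu tau : R) :
  0 < pi < 1 -> - xu < tau < xq -> 0 < kappa pi xq xu tau.
Proof.
move=> /andP[pi0 pi1] /andP[xutau tauxq].
by rewrite /kappa divr_gt0 // mulr_gt0 //; lra.
Qed.

Lemma kappa_lt (R : realType) (pi xq xu tau tau' : R) :
  0 < pi < 1 -> - xu < tau -> tau < tau' -> tau' < xq ->
  kappa pi xq xu tau < kappa pi xq xu tau'.
Proof.
move=> /andP[pi0 pi1] xutau tt' tau'xq.
have xq_tau : 0 < xq - tau by lra.
have xq_tau' : 0 < xq - tau' by lra.
rewrite /kappa ltr_pdivrMr ?mulr_gt0 // mulrAC ltr_pdivlMr ?mulr_gt0 //.
rewrite -subr_gt0 (_ : _ - _ = (1 - pi) * pi * ((tau' - tau) * (xq + xu))); last by ring.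
by rewrite !mulr_gt0 //; lra.
Qed.

(* Adding to a mixture a band on which the density ratio is at most k, when
   the ratio exceeds k on the original part, lowers the posterior weight. *)
Lemma posterior_lt_band (R : realFieldType) (p q a b d e k : R) :
  0 < p -> 0 < q -> 0 < a -> 0 < b -> 0 < d -> 0 < e ->
  d <= k * e -> k * b < a ->
  p * (a + d) / (p * (a + d) + q * (b + e)) < p * a / (p * a + q * b).
Proof.
move=> p0 q0 a0 b0 d0 e0 dk kb.
have db_ae : d * b < a * e by nra.
have pq : 0 < p * q by exact: mulr_gt0.
rewrite ltr_pdivrMr; last by nra.
rewrite mulrAC ltr_pdivlMr; last by nra.
nra.
Qed.

Section Monotonicity.
Variables (R : realType) (hq hu : R -> R -> R) (pi xq xu t tau tau' : R).
Hypotheses (pi01 : 0 < pi < 1) (hq_dens : is_pos_density hq)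
  (hu_dens : is_pos_density hu) (mlr : MLR hq hu)
  (xu_tau : - xu < tau) (tau_tau' : tau < tau') (tau'_xq : tau' < xq).

Let L := lr hq hu t.
Let k := kappa pi xq xu tau.
Let k' := kappa pi xq xu tau'.
Let band := superlevel L k `\` superlevel L k'.

Let k_gt0 : 0 < k.
Proof. by apply: kappa_gt0; rewrite // xu_tau (lt_trans tau_tau'). Qed.

Let k_lt : k < k'.
Proof. exact: kappa_lt. Qed.

Let L_cont : continuous L.
Proof. by case: mlr => cF *; exact: continuous_section. Qed.

Let L_incr : forall g1 g2, g1 < g2 -> L g1 < L g2.
Proof. by case: mlr => _ _ incr _ _; exact: incr. Qed.

Let L_small : forall e, 0 < e -> exists g, L g < e.
Proof. by case: mlr => _ _ _ small _; exact: small. Qed.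

Let L_large : forall M, exists g, M < L g.
Proof. by case: mlr => _ _ _ _ large; exact: large. Qed.

Let mS (c : R) : measurable (superlevel L c).
Proof. exact: measurable_superlevel. Qed.

Let mband : measurable band.
Proof. exact: measurableD. Qed.

Let acc_split (h : R -> R -> R) : is_pos_density h ->
  secint h t (accset hq hu pi xq xu t tau) =
  secint h t (superlevel L k') + secint h t band.
Proof.
case=> _ _ _ h_int; apply: secint_split => //; first exact: mS k.
by move=> g k'L; exact: lt_trans k_lt k'L.
Qed.

Let upper_gt0 (h : R -> R -> R) : is_pos_density h -> 0 < secint h t (superlevel L k').
Proof.
case=> h_pos _ _ h_int; apply: secint_gt0 => //.
exact: superlevel_measure_gt0.
Qed.

Let band_gt0 (h : R -> R -> R) : is_pos_density h -> 0 < secint h t band.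
Proof.
case=> h_pos _ _ h_int; apply: secint_gt0 => //.
exact: band_measure_gt0.
Qed.

(* s_1 strictly increases: the removed band has likelihood ratio at most
   kappa(tau') while the ratio exceeds kappa(tau') on A(tau'). *)
Lemma s1_lt : s1 hq hu pi xq xu t tau < s1 hq hu pi xq xu t tau'.
Proof.
case: (hq_dens) (hu_dens) => _ _ _ hq_int [hu_pos _ _ hu_int].
have [pi0 pi1] := andP pi01.
rewrite /s1 !acc_split //; apply: (posterior_lt_band (k := k')).
- exact: pi0.
- by rewrite subr_gt0.
- exact: upper_gt0.
- exact: upper_gt0.
- exact: band_gt0.
- exact: band_gt0.
- apply: secint_le_ratio => // g [_ /negP]; rewrite /superlevel /= -leNgt.
  by rewrite /L /lr ler_pdivrMr // mulrC.
- apply: secint_gt_ratio => //; first exact: superlevel_measure_gt0.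
  by move=> g; rewrite /superlevel /= /L /lr ltr_pdivlMr // mulrC.
Qed.

(* s_2 strictly decreases: the removed band has positive mass. *)
Lemma s2_lt : s2 hq hu pi xq xu t tau' < s2 hq hu pi xq xu t tau.
Proof.
have [pi0 pi1] := andP pi01; have pi'0 : 0 < 1 - pi by rewrite subr_gt0.
have mass_gt0 (h : R -> R -> R) : is_pos_density h -> 0 < secint h t setT.
  case=> h_pos _ _ h_int; apply: secint_gt0 => //.
  exact: lebesgue_measure_gt0_itv ltr01 (subsetT _).
rewrite /s2 !acc_split // ltr_pM2r; last first.
  by rewrite invr_gt0 addr_gt0 // mulr_gt0 // mass_gt0.
by rewrite ltrD // ltr_pM2l // ltrDl band_gt0.
Qed.

End Monotonicity.

Section Crossing.
Local Open Scope order_scope.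

Lemma crossing d d' (T : orderType d) (T' : orderType d') (D : {pred T})
    (f g : T -> T') (ts t1 t2 : T) (beta : T') :
  {in D &, {homo f : x y / x < y}} -> {in D &, {homo g : x y /~ x < y}} ->
  ts \in D -> t1 \in D -> t2 \in D ->
  f ts = g ts -> f t1 = beta -> g t2 = beta ->
  (f ts < beta <-> t2 < t1) /\ (beta < f ts <-> t1 < t2).
Proof.
move=> f_incr g_decr Dts Dt1 Dt2 fg_ts f_t1 g_t2.
have f_mono := leW_mono_in (le_mono_in f_incr).
have g_mono := leW_nmono_in (le_nmono_in g_decr).
have below_f : (f ts < beta) = (ts < t1) by rewrite -f_t1 f_mono.
have below_g : (f ts < beta) = (t2 < ts) by rewrite fg_ts -g_t2 g_mono.
have above_f : (beta < f ts) = (t1 < ts) by rewrite -f_t1 f_mono.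
have above_g : (beta < f ts) = (ts < t2) by rewrite fg_ts -g_t2 g_mono.
split; split => [lt_beta | lt_t].
- have ts_t1 := lt_beta; rewrite below_f in ts_t1.
  have t2_ts := lt_beta; rewrite below_g in t2_ts.
  exact: lt_trans t2_ts ts_t1.
- apply: contraTT lt_t => not_lt.
  have t1_ts : t1 <= ts by move: not_lt; rewrite below_f leNgt.
  have ts_t2 : ts <= t2 by move: not_lt; rewrite below_g leNgt.
  by rewrite -leNgt (le_trans t1_ts ts_t2).
- have t1_ts := lt_beta; rewrite above_f in t1_ts.
  have ts_t2 := lt_beta; rewrite above_g in ts_t2.
  exact: lt_trans t1_ts ts_t2.
- apply: contraTT lt_t => not_gt.
  have ts_t1 : ts <= t1 by move: not_gt; rewrite above_f leNgt.
  have t2_ts : t2 <= ts by move: not_gt; rewrite above_g leNgt.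
  by rewrite -leNgt (le_trans t2_ts ts_t1).
Qed.

End Crossing.

Theorem mainTheorem10 (R : realType) (hq hu : R -> R -> R) (pi xq xu c : R)
  (theta tstar t1 t2 : R) :
  0 < pi < 1 -> 0 < xq -> 0 < xu ->
  is_pos_density hq -> is_pos_density hu -> MLR hq hu ->
  - xu < c < xq ->
  let beta := (xu + c) / (xq + xu) in
  phi hq hu pi theta < beta ->
  (* tstar = tau^*(theta): the equalizing prejudice *)
  - xu < tstar < xq ->
  s1 hq hu pi xq xu theta tstar = s2 hq hu pi xq xu theta tstar ->
  (* t1 = tau_1^d(theta), t2 = tau_2^d(theta): the critical prejudices *)
  - xu < t1 < xq -> s1 hq hu pi xq xu theta t1 = beta ->
  - xu < t2 < xq -> s2 hq hu pi xq xu theta t2 = beta ->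
  (s1 hq hu pi xq xu theta tstar < beta <-> t2 < t1) /\
  (beta < s1 hq hu pi xq xu theta tstar <-> t1 < t2).
Proof.
move=> pi01 _ _ hq_dens hu_dens mlr _ beta _ tstar_in s_eq t1_in s1_t1 t2_in s2_t2.
apply: (crossing (D := [pred x | - xu < x < xq])
  (f := s1 hq hu pi xq xu theta) (g := s2 hq hu pi xq xu theta)) => //.
- move=> x y /andP[x_lo _] /andP[_ y_hi] xy.
  exact: s1_lt pi01 hq_dens hu_dens mlr x_lo xy y_hi.
- move=> x y /andP[_ x_hi] /andP[y_lo _] yx.
  exact: s2_lt pi01 hq_dens hu_dens mlr y_lo yx x_hi.
Qed.
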